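(* Let $a\ge 2$ and $c\ge 2$ be even integers with $a\neq c$. Then $U=\{(a,-a),(c,-c)\}\subseteq\mathcal{B}$ is unavoidable.
   Context: The bicyclic inverse semigroup is $\mathcal{B}=\{(a,b)\in\mathbb{Z}\times\mathbb{Z}\mid a\ge 0,\ a+b\ge 0\}$ with multiplication $(a,b)(c,d)=(\max\{c+d,a\}-d,\ b+d)$. A subset $U\subseteq\mathcal{B}$ is called avoidable if $\mathcal{B}$ can be partitioned into two subsets $A$ and $B$ such that no element of $U$ can be written as a product $xy$ of two distinct elements $x\neq y$ both in $A$, or both in $B$. A set is unavoidable if it is not avoidable. *)

From Stdlib Require Import ZArith.
Open Scope Z_scope.

Definition inB (p : Z * Z) : Prop := 0 <= fst p /\ 0 <= fst p + snd p.

Definition bmul (p q : Z * Z) : Z * Z :=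
  (Z.max (fst q + snd q) (fst p) - snd q, snd p + snd q).

(* A 2-partition {A, B} of the bicyclic semigroup is encoded by a colouring
   col : Z*Z -> bool restricted to B (A = col^-1 true, B = col^-1 false). *)
Definition avoidable (U : Z * Z -> Prop) : Prop :=
  exists col : Z * Z -> bool,
    forall x y : Z * Z, inB x -> inB y -> x <> y -> col x = col y ->
      ~ U (bmul x y).

Definition unavoidable (U : Z * Z -> Prop) : Prop := ~ avoidable U.

(* Three pairwise distinct elements of the bicyclic semigroup whose three
   pairwise products all lie in U defeat every 2-colouring, since two of them
   share a colour.  For [a = 2h < c] such a triangle is
   [(h, -h)], [(c - h, -(c - h))] and [(a, -h)]: the first two multiply to
   [(c, -c)], and [(a, -h)] turns [(h, -h)] into [(a, -a)] and
   [(c - h, -(c - h))] into [(c, -c)]. *)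
From Stdlib Require Import ZArith Lia.
Open Scope Z_scope.

Lemma unavoidable_mono (U V : Z * Z -> Prop) :
  (forall p, U p -> V p) -> unavoidable U -> unavoidable V.
Proof.
  intros UV HU [col H]; apply HU; exists col.
  intros x y Hx Hy Hxy Hcol HUxy; exact (H x y Hx Hy Hxy Hcol (UV _ HUxy)).
Qed.

Lemma bool_pigeonhole3 (b1 b2 b3 : bool) : b1 = b2 \/ b1 = b3 \/ b2 = b3.
Proof. destruct b1, b2, b3; auto. Qed.

Lemma unavoidable_triangle (U : Z * Z -> Prop) (x y z : Z * Z) :
  inB x -> inB y -> inB z -> x <> y -> x <> z -> y <> z ->
  U (bmul x y) -> U (bmul x z) -> U (bmul y z) -> unavoidable U.
Proof.
  intros Hx Hy Hz Dxy Dxz Dyz Uxy Uxz Uyz [col H].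
  destruct (bool_pigeonhole3 (col x) (col y) (col z)) as [E | [E | E]].
  - exact (H x y Hx Hy Dxy E Uxy).
  - exact (H x z Hx Hz Dxz E Uxz).
  - exact (H y z Hy Hz Dyz E Uyz).
Qed.

Lemma bmul_antidiag (h k : Z) :
  0 <= h -> bmul (h, - h) (k, - k) = (h + k, - (h + k)).
Proof. intros Hh; unfold bmul; cbn [fst snd]; f_equal; lia. Qed.

Lemma bmul_antidiag_double (m h : Z) :
  h <= m -> bmul (m, - m) (2 * h, - h) = (m + h, - (m + h)).
Proof. intros Hhm; unfold bmul; cbn [fst snd]; f_equal; lia. Qed.

Lemma unavoidable_double_lt (h c : Z) :
  1 <= h -> 2 * h < c ->
  unavoidable (fun p : Z * Z => p = (2 * h, - (2 * h)) \/ p = (c, - c)).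
Proof.
  intros Hh Hc.
  apply (unavoidable_triangle _ (h, - h) (c - h, - (c - h)) (2 * h, - h));
    try (unfold inB; cbn [fst snd]; lia);
    try (intros E; pose proof (f_equal fst E); pose proof (f_equal snd E);
         cbn [fst snd] in *; lia).
  - rewrite bmul_antidiag by lia; right; f_equal; lia.
  - rewrite bmul_antidiag_double by lia; left; f_equal; lia.
  - rewrite bmul_antidiag_double by lia; right; f_equal; lia.
Qed.

Theorem corollary3p3 (a c : Z) :
  2 <= a -> Z.Even a -> 2 <= c -> Z.Even c -> a <> c ->
  unavoidable (fun p : Z * Z => p = (a, - a) \/ p = (c, - c)).
Proof.
  intros Ha [h ->] Hc [k ->] Hne.
  destruct (Z.lt_total h k) as [Hlt | [Heq | Hgt]]; [ | lia | ].
  - apply unavoidable_double_lt; lia.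
  - apply (unavoidable_mono (fun p => p = (2 * k, - (2 * k)) \/ p = (2 * h, - (2 * h)))).
    + tauto.
    + apply unavoidable_double_lt; lia.
Qed.
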